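(* (Dobinski's formula) Let $\lambda$ be a nonzero real number and $x$ a real number with $|\lambda x|<1$. Then for every integer $n\ge0$, \[ \mathrm{Bel}_{n,\lambda}(x)=e_{\lambda}^{-1}(x)\Big(x\frac{d}{dx}\Big)^{n}e_{\lambda}(x)=e_{\lambda}^{-1}(x)\sum_{k=0}^{\infty}\frac{(1)_{k,\lambda}}{k!}\,k^{n}x^{k}. \]
   Context: For nonzero real $\lambda$: $(1)_{0,\lambda}=1$, $(1)_{k,\lambda}=1(1-\lambda)\cdots(1-(k-1)\lambda)$ for $k\ge1$; $e_\lambda(x)=(1+\lambda x)^{1/\lambda}$ and $e_\lambda^{-1}(x)=(1+\lambda x)^{-1/\lambda}$. The new type degenerate Bell polynomials $\mathrm{Bel}_{n,\lambda}(x)$ are defined by the generating function $e_{\lambda}(xe^{t})\,e_{\lambda}^{-1}(x)=\sum_{n=0}^{\infty}\mathrm{Bel}_{n,\lambda}(x)\frac{t^{n}}{n!}$, i.e. $\big(\frac{1+\lambda xe^t}{1+\lambda x}\big)^{1/\lambda}$ expanded in powers of $t$. $(x\frac{d}{dx})^n$ denotes the $n$-fold iterate of the operator $f\mapsto xf'(x)$. *)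

From Stdlib Require Import Reals.
From Coquelicot Require Import Coquelicot.
Open Scope R_scope.

(* (1)_{k,lambda} = 1 (1 - lambda) ... (1 - (k-1) lambda); empty product = 1 *)
Fixpoint lam_falling (lam : R) (k : nat) : R :=
  match k with
  | O => 1
  | S k' => lam_falling lam k' * (1 - INR k' * lam)
  end.

Definition e_lam (lam x : R) : R := Rpower (1 + lam * x) (1 / lam).
Definition e_lam_inv (lam x : R) : R := Rpower (1 + lam * x) (- (1 / lam)).

Definition bel_gf (lam x : R) (t : R) : R :=
  e_lam lam (x * exp t) * e_lam_inv lam x.

(* Bel_{n,lambda}(x) := n-th Taylor coefficient times n!, i.e. the n-th
   t-derivative of the generating function at t = 0. *)
Definition Bel (n : nat) (lam x : R) : R := Derive_n (bel_gf lam x) n 0.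

Definition xD (f : R -> R) : R -> R := fun y => y * Derive f y.
Definition xD_iter (n : nat) (f : R -> R) : R -> R := Nat.iter n xD f.

(* The coefficients a_k = (1)_{k,lambda} / k! satisfy (k+1) a_(k+1) = (1 - k lambda) a_k,
   so S(y) = sum a_k y^k solves (1 + lambda y) S' = S.  Comparing |a_k| with the positive
   coefficients (1)_{k,-|lambda|} / k!, whose ratios (1 + k|lambda|)/(k+1) tend to |lambda|,
   shows that S converges on |lambda y| < 1.  There e_lambda solves the same equation, so
   S * e_lambda^{-1} is constant, equal to 1, and e_lambda = S.  On a power series the Euler
   operator y d/dy multiplies the k-th coefficient by k, which gives the series for
   (x d/dx)^n e_lambda; and d/dt g(x e^t) = (x d/dx g)(x e^t) turns the n-th t-derivative of
   the generating function at t = 0 into e_lambda^{-1}(x) (x d/dx)^n e_lambda(x). *)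

From Stdlib Require Import Reals Lra Lia.
From Coquelicot Require Import Coquelicot.
Open Scope R_scope.

Lemma CV_radius_le_abs (a b : nat -> R) :
  (forall k, Rabs (a k) <= Rabs (b k)) -> Rbar_le (CV_radius b) (CV_radius a).
Proof.
  intros Hab. apply (proj2 (Lub_Rbar_correct (CV_disk b))).
  intros r Hr. apply (proj1 (Lub_Rbar_correct (CV_disk a))).
  apply (@ex_series_le R_AbsRing R_CompleteNormedModule _ (fun k => Rabs (b k * r ^ k)));
    [|exact Hr].
  intros k. rewrite Rabs_Rabsolu, !Rabs_mult.
  apply Rmult_le_compat_r; [apply Rabs_pos | apply Hab].
Qed.

Lemma PS_incr_1_derive (c : nat -> R) (k : nat) : PS_incr_1 (PS_derive c) k = INR k * c k.
Proof. destruct k as [|k]; simpl; [symmetry; apply Rmult_0_l | reflexivity]. Qed.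

Lemma CV_radius_pow_mul (n : nat) (c : nat -> R) :
  CV_radius (fun k => INR k ^ n * c k) = CV_radius c.
Proof.
  induction n as [|n IHn].
  - apply CV_radius_ext. intros k. apply Rmult_1_l.
  - rewrite <- IHn, <- (CV_radius_derive (fun k => INR k ^ n * c k)),
      <- (CV_radius_incr_1 (PS_derive _)).
    apply CV_radius_ext. intros k. rewrite PS_incr_1_derive. simpl. ring.
Qed.

Lemma xD_PSeries (g : R -> R) (c : nat -> R) (y : R) :
  Rbar_lt (Rabs y) (CV_radius c) -> locally y (fun z => g z = PSeries c z) ->
  xD g y = PSeries (fun k => INR k * c k) y.
Proof.
  intros Hdisk Hg. unfold xD.
  rewrite (Derive_ext_loc _ _ _ Hg), Derive_PSeries, <- PSeries_incr_1 by exact Hdisk.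
  apply PSeries_ext, PS_incr_1_derive.
Qed.

Lemma is_derive_comp_exp (g : R -> R) (x t : R) :
  ex_derive g (x * exp t) -> is_derive (fun s => g (x * exp s)) t (xD g (x * exp t)).
Proof.
  intros [dg Hdg]. unfold xD. rewrite (is_derive_unique _ _ _ Hdg).
  apply (is_derive_comp g (fun s => x * exp s)); [exact Hdg|].
  auto_derive; [exact I | ring].
Qed.

Section EulerOperatorOnPowerSeries.

Variables (c : nat -> R) (f : R -> R) (U : R -> Prop).
Hypothesis U_open : forall y, U y -> locally y U.
Hypothesis U_disk : forall y, U y -> Rbar_lt (Rabs y) (CV_radius c).
Hypothesis f_PSeries : forall y, U y -> f y = PSeries c y.

Lemma xD_iter_PSeries (n : nat) (y : R) :
  U y -> xD_iter n f y = PSeries (fun k => INR k ^ n * c k) y.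
Proof.
  revert y. induction n as [|n IHn]; intros y Hy.
  - rewrite f_PSeries by exact Hy. apply PSeries_ext. intros k. symmetry. apply Rmult_1_l.
  - simpl. rewrite (xD_PSeries _ (fun k => INR k ^ n * c k)).
    + apply PSeries_ext. intros k. symmetry. apply Rmult_assoc.
    + rewrite CV_radius_pow_mul. apply U_disk, Hy.
    + apply (filter_imp U); [exact IHn | apply U_open, Hy].
Qed.

Lemma ex_derive_xD_iter (n : nat) (y : R) : U y -> ex_derive (xD_iter n f) y.
Proof.
  intros Hy. apply (ex_derive_ext_loc (PSeries (fun k => INR k ^ n * c k))).
  - apply (filter_imp U); [intros z Hz; symmetry; apply xD_iter_PSeries, Hz | apply U_open, Hy].
  - apply ex_derive_PSeries. rewrite CV_radius_pow_mul. apply U_disk, Hy.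
Qed.

Lemma Derive_n_comp_exp (n : nat) (x t : R) :
  U (x * exp t) -> Derive_n (fun s => f (x * exp s)) n t = xD_iter n f (x * exp t).
Proof.
  revert t. induction n as [|n IHn]; intros t Ht; [reflexivity|].
  assert (Hnear : locally t (fun s => U (x * exp s))).
  { assert (Hcont : continuous (fun s => x * exp s) t)
      by (apply continuity_pt_filterlim, derivable_continuous_pt,
                derivable_pt_scal, derivable_pt_exp).
    apply Hcont, U_open, Ht. }
  simpl Derive_n. rewrite (Derive_ext_loc _ (fun s => xD_iter n f (x * exp s))).
  - apply is_derive_unique, is_derive_comp_exp, ex_derive_xD_iter, Ht.
  - apply (filter_imp _ _ IHn Hnear).
Qed.

End EulerOperatorOnPowerSeries.

Lemma lam_falling_neg_pos (mu : R) (k : nat) : 0 <= mu -> 0 < lam_falling (- mu) k.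
Proof.
  intros Hmu. induction k as [|k IHk]; simpl; [lra|].
  apply Rmult_lt_0_compat; [exact IHk|].
  pose proof (pos_INR k). nra.
Qed.

Lemma Rabs_lam_falling_le (lam : R) (k : nat) :
  Rabs (lam_falling lam k) <= lam_falling (- Rabs lam) k.
Proof.
  induction k as [|k IHk]; simpl.
  - rewrite Rabs_R1. lra.
  - rewrite Rabs_mult. apply Rmult_le_compat; try apply Rabs_pos; [exact IHk|].
    eapply Rle_trans; [apply Rabs_triang|].
    rewrite Rabs_R1, Rabs_Ropp, Rabs_mult, (Rabs_pos_eq (INR k)) by apply pos_INR.
    lra.
Qed.

Definition e_lam_coef (lam : R) (k : nat) : R := lam_falling lam k / INR (Factorial.fact k).

Lemma e_lam_coef_0 (lam : R) : e_lam_coef lam 0 = 1.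
Proof. unfold e_lam_coef. simpl. field. Qed.

Lemma e_lam_coef_S (lam : R) (k : nat) :
  e_lam_coef lam (S k) = (1 - INR k * lam) / INR (S k) * e_lam_coef lam k.
Proof.
  unfold e_lam_coef. simpl lam_falling.
  change (Factorial.fact (S k)) with (S k * Factorial.fact k)%nat. rewrite mult_INR.
  field. split; [apply INR_fact_neq_0 | apply not_0_INR; lia].
Qed.

Lemma is_lim_seq_inv_INR_S : is_lim_seq (fun k => / INR (S k)) 0.
Proof.
  apply (is_lim_seq_incr_1 (fun k => / INR k)).
  apply (is_lim_seq_inv INR p_infty is_lim_seq_INR). discriminate.
Qed.

Lemma CV_radius_e_lam_coef_neg (mu : R) : 0 < mu -> CV_radius (e_lam_coef (- mu)) = Finite (/ mu).
Proof.
  intros Hmu.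
  assert (Hpos : forall k, 0 < e_lam_coef (- mu) k).
  { intros k. apply Rdiv_lt_0_compat; [apply lam_falling_neg_pos; lra | apply INR_fact_lt_0]. }
  apply CV_radius_finite_DAlembert; [intros k; apply Rgt_not_eq, Hpos | exact Hmu |].
  apply is_lim_seq_ext with (fun k => mu + (1 - mu) * / INR (S k)).
  - intros k. pose proof (Hpos k). pose proof (pos_INR k).
    assert (HS : 0 < INR (S k)) by (apply lt_0_INR; lia).
    replace (e_lam_coef (- mu) (S k) / e_lam_coef (- mu) k) with ((1 + INR k * mu) / INR (S k))
      by (rewrite e_lam_coef_S; field; lra).
    rewrite Rabs_pos_eq by (apply Rlt_le, Rdiv_lt_0_compat; nra).
    rewrite S_INR. field. rewrite <- S_INR. lra.
  - replace (Finite mu) with (Finite (mu + (1 - mu) * 0)) by (f_equal; ring).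
    apply is_lim_seq_plus'; [apply is_lim_seq_const|].
    apply (is_lim_seq_scal_l _ (1 - mu) 0 is_lim_seq_inv_INR_S).
Qed.

Lemma CV_radius_e_lam_coef (lam : R) :
  lam <> 0 -> Rbar_le (Finite (/ Rabs lam)) (CV_radius (e_lam_coef lam)).
Proof.
  intros Hlam. rewrite <- CV_radius_e_lam_coef_neg by (apply Rabs_pos_lt, Hlam).
  apply CV_radius_le_abs. intros k. unfold e_lam_coef, Rdiv.
  rewrite !Rabs_mult, (Rabs_pos_eq (lam_falling (- Rabs lam) k))
    by (apply Rlt_le, lam_falling_neg_pos, Rabs_pos).
  apply Rmult_le_compat_r; [apply Rabs_pos | apply Rabs_lam_falling_le].
Qed.

Lemma e_lam_coef_disk (lam y : R) :
  lam <> 0 -> Rabs (lam * y) < 1 -> Rbar_lt (Rabs y) (CV_radius (e_lam_coef lam)).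
Proof.
  intros Hlam Hy. eapply Rbar_lt_le_trans; [|apply CV_radius_e_lam_coef, Hlam].
  simpl. rewrite Rabs_mult in Hy. pose proof (Rabs_pos_lt _ Hlam).
  apply (Rmult_lt_reg_l (Rabs lam)); [lra|]. rewrite Rinv_r; lra.
Qed.

Lemma e_lam_mul_inv (lam y : R) : 0 < 1 + lam * y -> e_lam lam y * e_lam_inv lam y = 1.
Proof.
  intros Hy. unfold e_lam, e_lam_inv. rewrite <- Rpower_plus, Rplus_opp_r. apply Rpower_O, Hy.
Qed.

Lemma is_derive_e_lam_inv (lam y : R) : lam <> 0 -> 0 < 1 + lam * y ->
  is_derive (e_lam_inv lam) y (- e_lam_inv lam y / (1 + lam * y)).
Proof.
  intros Hlam Hy. unfold e_lam_inv, Rpower. auto_derive; [lra|]. field. lra.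
Qed.

Lemma locally_Rabs_mul_lt_1 (lam y : R) :
  Rabs (lam * y) < 1 -> locally y (fun z => Rabs (lam * z) < 1).
Proof.
  intros Hy.
  assert (Hcont : continuous (fun z => Rabs (lam * z)) y).
  { apply continuous_Rabs_comp, continuity_pt_filterlim.
    apply derivable_continuous_pt, derivable_pt_scal, derivable_pt_id. }
  apply (Hcont (fun r => r < 1)), (locally_open (fun r => r < 1)); [apply open_lt | auto | exact Hy].
Qed.

Lemma e_lam_coef_ode (lam y : R) : lam <> 0 -> Rabs (lam * y) < 1 ->
  (1 + lam * y) * PSeries (PS_derive (e_lam_coef lam)) y = PSeries (e_lam_coef lam) y.
Proof.
  intros Hlam Hy. pose proof (e_lam_coef_disk lam y Hlam Hy) as Hdisk.
  rewrite Rmult_plus_distr_r, Rmult_1_l, Rmult_assoc, <- PSeries_incr_1, <- PSeries_scal,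
    <- PSeries_plus.
  - apply PSeries_ext. intros k. unfold PS_plus, PS_scal.
    rewrite PS_incr_1_derive. unfold PS_derive. rewrite e_lam_coef_S.
    unfold scal, plus; simpl; unfold mult, plus; simpl.
    field. change (INR (S k) <> 0). apply not_0_INR. lia.
  - apply CV_radius_inside. rewrite CV_radius_derive. exact Hdisk.
  - apply CV_radius_inside.
    rewrite CV_radius_scal, CV_radius_incr_1, CV_radius_derive by exact Hlam. exact Hdisk.
Qed.

Lemma e_lam_inv_0 (lam : R) : e_lam_inv lam 0 = 1.
Proof. unfold e_lam_inv, Rpower. rewrite Rmult_0_r, Rplus_0_r, ln_1, Rmult_0_r. apply exp_0. Qed.

Lemma e_lam_PSeries (lam y : R) : lam <> 0 -> Rabs (lam * y) < 1 ->
  e_lam lam y = PSeries (e_lam_coef lam) y.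
Proof.
  intros Hlam Hy.
  set (h z := PSeries (e_lam_coef lam) z * e_lam_inv lam z).
  assert (Hpos : forall z, Rabs (lam * z) < 1 -> 0 < 1 + lam * z)
    by (intros z Hz; apply Rabs_def2 in Hz; lra).
  assert (Hh' : forall z, Rabs (lam * z) < 1 -> is_derive h z 0).
  { intros z Hz. pose proof (e_lam_coef_disk lam z Hlam Hz) as Hdisk.
    replace 0 with (PSeries (PS_derive (e_lam_coef lam)) z * e_lam_inv lam z
                    + PSeries (e_lam_coef lam) z * (- e_lam_inv lam z / (1 + lam * z))).
    - apply (is_derive_mult (PSeries (e_lam_coef lam)) (e_lam_inv lam));
        [apply is_derive_PSeries, Hdisk | apply is_derive_e_lam_inv; auto | intros; apply Rmult_comm].
    - rewrite <- (e_lam_coef_ode lam z) by assumption. field. pose proof (Hpos z Hz). lra. }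
  assert (Hsegment : forall z, Rmin 0 y <= z <= Rmax 0 y -> Rabs (lam * z) < 1).
  { intros z Hz. eapply Rle_lt_trans; [|exact Hy]. rewrite !Rabs_mult.
    apply Rmult_le_compat_l; [apply Rabs_pos|].
    unfold Rmin, Rmax in Hz. destruct (Rle_dec 0 y).
    - rewrite !Rabs_pos_eq; lra.
    - rewrite !Rabs_left1; lra. }
  destruct (MVT_gen h 0 y (fun _ => 0)) as [c [_ Hmvt]].
  - intros z Hz. apply Hh', Hsegment. lra.
  - intros z Hz. apply continuity_pt_filterlim, (@ex_derive_continuous R_AbsRing R_NormedModule).
    eexists. apply Hh', Hsegment, Hz.
  - assert (Hh0 : h 0 = 1) by (unfold h; rewrite PSeries_0, e_lam_coef_0, e_lam_inv_0; ring).
    assert (Hhy : h y = 1) by lra.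
    rewrite <- (Rmult_1_r (e_lam lam y)), <- Hhy. unfold h.
    rewrite Rmult_comm, Rmult_assoc, (Rmult_comm (e_lam_inv lam y)), e_lam_mul_inv by auto.
    ring.
Qed.

Theorem theorem6 (lam x : R) (n : nat) :
  lam <> 0 -> Rabs (lam * x) < 1 ->
  Bel n lam x = e_lam_inv lam x * xD_iter n (e_lam lam) x /\
  is_series (fun k : nat => lam_falling lam k / INR (Factorial.fact k) * INR k ^ n * x ^ k)
            (xD_iter n (e_lam lam) x).
Proof.
  intros Hlam Hx.
  pose proof (locally_Rabs_mul_lt_1 lam) as U_open.
  pose proof (fun y => e_lam_coef_disk lam y Hlam) as U_disk.
  pose proof (fun y => e_lam_PSeries lam y Hlam) as e_lam_eq.
  split.
  - unfold Bel. rewrite (Derive_n_ext _ (fun t => e_lam_inv lam x * e_lam lam (x * exp t)))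
      by (intros t; apply Rmult_comm).
    rewrite Derive_n_scal_l, (Derive_n_comp_exp _ _ _ U_open U_disk e_lam_eq);
      rewrite exp_0, Rmult_1_r; [reflexivity | exact Hx].
  - rewrite (xD_iter_PSeries _ _ _ U_open U_disk e_lam_eq n x Hx).
    eapply is_series_ext; [|apply PSeries_correct, CV_radius_inside].
    + intros k. unfold scal; simpl; unfold mult; simpl. rewrite pow_n_pow. unfold e_lam_coef. ring.
    + rewrite CV_radius_pow_mul. apply U_disk, Hx.
Qed.
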